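(* Let $\tau$ and $\tau'$ be permutations of $F^r$ and $F^{r'}$ respectively, fixing the all-zero vectors, and let $\tau|\tau'$ be the permutation of $F^{r+r'}$ given by $(x|y)\mapsto\tau(x)|\tau'(y)$ for $x\in F^r$, $y\in F^{r'}$. Then: (1) if $SQS_\tau$ and $SQS_{\tau'}$ (of orders $2^{r+1}$ and $2^{r'+1}$) are point transitive, then $SQS_{\tau|\tau'}$ (of order $2^{r+r'+1}$) is point transitive; (2) if $S_\tau$ and $S_{\tau'}$ are coordinate transitive codes, then $S_{\tau|\tau'}$ is coordinate transitive; (3) if $\tau$ and $\tau'$ are induced by automorphisms of regular subgroups of $\mathrm{GA}(r,2)$ and $\mathrm{GA}(r',2)$ respectively, and $S_\tau$, $S_{\tau'}$ are coordinate transitive, then $S_{\tau|\tau'}$ is neighbor transitive.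
   Context: $F=\mathrm{GF}(2)$, $\mathbf 0$ the all-zero vector, $x|y$ concatenation. For $s\ge1$ and a permutation $\rho$ of $F^s$ fixing $\mathbf 0$: index coordinates of $F^{2^s}$ by $F^s$, let $e_a$ be the unit vector at $a$, $\mathcal H=\{x\in F^{2^s}:\sum_{a:x_a=1}a=\mathbf 0,\ \mathrm{wt}(x)\text{ even}\}$, $C\times D=\{x|y:x\in C,y\in D\}$, and $S_\rho=\bigcup_{a\in F^s}(\mathcal H+e_a+e_{\mathbf 0})\times(\mathcal H+e_{\rho(a)}+e_{\rho(\mathbf 0)})\subseteq F^{2^{s+1}}$. Its positions are denoted $(\{a\},\emptyset)$ (first half) and $(\emptyset,\{a\})$ (second half), $(X,Y)$ denotes $\{(\{x\},\emptyset):x\in X\}\cup\{(\emptyset,\{y\}):y\in Y\}$, and $SQS_\rho$ is the Steiner quadruple system of quadruples $\{(\{a,b,c,d\},\emptyset)\}$ and $\{(\emptyset,\{a,b,c,d\})\}$ with $a,b,c,d$ pairwise distinct and $a+b+c+d=\mathbf 0$, together with $\{(\{a,c\},\{b,d\}):\rho(a+c)=b+d\ne\mathbf 0\}$. An SQS is point transitive if its automorphism group is transitive on points. $\mathrm{PAut}(C)=\{\pi:\pi(C)=C\}$ (coordinate permutations, $\pi(y)_i=y_{\pi^{-1}(i)}$); $C$ is coordinate transitive if $\mathrm{PAut}(C)$ is transitive on coordinates. $\mathrm{Aut}(C)$ is the stabilizer of $C$ in the group of maps $y\mapsto x+\pi(y)$; $C$ is neighbor transitive if $\mathrm{Aut}(C)$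 is transitive on $C$ and on the words at distance exactly $1$ from $C$. $\mathrm{GA}(s,2)$ is the group of affine maps $b\mapsto a+Mb$ of $F^s$; a subgroup $G$ is regular if it acts regularly on $F^s$; with $g_a\in G$ the unique element mapping $\mathbf 0$ to $a$, an automorphism $T$ of $G$ induces the permutation $\rho$ of $F^s$ with $T(g_a)=g_{\rho(a)}$. *)

From HB Require Import structures.
From mathcomp Require Import all_boot all_order all_fingroup all_algebra.
Set Implicit Arguments. Unset Strict Implicit. Unset Printing Implicit Defensive.
Import GRing.Theory.
Local Open Scope ring_scope.

Definition vec (s : nat) := 'rV['F_2]_s.
(* coordinates of F^{2^{s+1}}: inl a = ({a},emptyset), inr a = (emptyset,{a}) *)
Definition pos (s : nat) := (vec s + vec s)%type.
Definition word (s : nat) := {ffun pos s -> 'F_2}.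
(* vectors of F^{2^s}, coordinates indexed by F^s *)
Definition half (s : nat) := {ffun vec s -> 'F_2}.

Definition unitv s (a : vec s) : half s := [ffun b => (b == a)%:R].

Definition inH s (x : half s) : bool :=
  ((\sum_(a | x a == 1) a) == 0) && ~~ odd #|[set a | x a == 1]|.

Definition inCoset s (x : half s) (a b : vec s) : bool :=
  [exists h : half s, inH h && (x == h + unitv a + unitv b)].

Definition lhalf s (w : word s) : half s := [ffun a => w (inl a)].
Definition rhalf s (w : word s) : half s := [ffun a => w (inr a)].

Definition S s (rho : vec s -> vec s) : {set word s} :=
  [set w | [exists a : vec s,
     inCoset (lhalf w) a 0 && inCoset (rhalf w) (rho a) (rho 0)]].

Definition SQS s (rho : vec s -> vec s) : {set {set pos s}} :=
  [set B : {set pos s} | [exists a : vec s, exists b : vec s,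
     exists c : vec s, exists d : vec s,
     [&& [&& a != b, a != c, a != d, b != c, b != d & c != d],
         a + b + c + d == 0 &
         (B == [set inl a; inl b; inl c; inl d])
      || (B == [set inr a; inr b; inr c; inr d])]
     || [&& rho (a + c) == b + d, b + d != 0 &
            B == [set inl a; inl c; inr b; inr d]]]].

Definition sqs_aut s (Q : {set {set pos s}}) (g : {perm pos s}) : bool :=
  [set [set g x | x in B] | B : {set pos s} in Q] == Q.

Definition point_transitive s (Q : {set {set pos s}}) : Prop :=
  forall x y : pos s, exists g : {perm pos s}, sqs_aut Q g /\ g x = y.

Definition permw s (pi : {perm pos s}) (y : word s) : word s :=
  [ffun i => y ((pi^-1)%g i)].

Definition in_PAut s (C : {set word s}) (pi : {perm pos s}) : bool :=
  [set permw pi y | y in C] == C.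

Definition coord_transitive s (C : {set word s}) : Prop :=
  forall i j : pos s, exists pi : {perm pos s}, in_PAut C pi /\ pi i = j.

Definition in_Aut s (C : {set word s}) (x : word s) (pi : {perm pos s}) : bool :=
  [set x + permw pi y | y in C] == C.

Definition hdist s (u v : word s) : nat := #|[set i | u i != v i]|.

Definition neighbors s (C : {set word s}) : {set word s} :=
  [set w | (w \notin C) && [exists c in C, hdist w c == 1%N]].

Definition Aut_transitive_on s (C X : {set word s}) : Prop :=
  forall u v, u \in X -> v \in X ->
    exists (x : word s) (pi : {perm pos s}), in_Aut C x pi /\ x + permw pi u = v.

Definition neighbor_transitive s (C : {set word s}) : Prop :=
  Aut_transitive_on C C /\ Aut_transitive_on C (neighbors C).

(* GA(s,2) as a set of permutations of F^s (row-vector convention b |-> a + b M) *)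
Definition GA s : {set {perm vec s}} :=
  [set g : {perm vec s} | [exists a : vec s, exists M : 'M['F_2]_s,
      (M \in unitmx) && [forall b : vec s, g b == a + b *m M]]].

Definition regular s (G : {set {perm vec s}}) : Prop :=
  forall x y : vec s, exists! g : {perm vec s}, g \in G /\ g x = y.

(* rho is induced by an automorphism T of a regular subgroup G of GA(s,2):
   T(g_a) = g_{rho(a)}, i.e. T(g)(0) = rho(g(0)) for g in G *)
Definition induced_by_regular_aut s (rho : vec s -> vec s) : Prop :=
  exists G : {group {perm vec s}},
    [/\ G \subset GA s, regular G &
        exists T : {perm {perm vec s}}, T \in Aut G /\
          forall g, g \in G -> T g 0 = rho (g 0)].

Definition catperm r r' (tau : vec r -> vec r) (tau' : vec r' -> vec r')
  : vec (r + r') -> vec (r + r') :=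
  fun z => row_mx (tau (lsubmx z)) (tau' (rsubmx z)).

(** Everything is governed by one condition on rho: there are additive
    bijections P, Q of F^s with rho (Q (rho v)) = P v ([swappable rho]). S_rho
    is the set of words (x|y) with both halves of even weight and syndrome y =
    rho (syndrome x), where the syndrome is the sum of the support. Hence the
    translations ({a},∅) |-> ({a+v},∅), (∅,{b}) |-> (∅,{b+w}) and, under this
    condition, the maps ({a},∅) |-> (∅,{P a + w}), (∅,{b}) |-> ({Q b + v},∅)
    are permutation automorphisms of S_rho, so S_rho is coordinate transitive.
    The blocks of SQS_rho are the supports of the weight-4 codewords of S_rho,
    hence PAut(S_rho) acts on SQS_rho and SQS_rho is point transitive.
    Conversely, point transitivity yields an automorphism of SQS_rho
    exchanging the two halves, and its action on the blocks {0,x,y,x+y} and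
    ({0,v},{0,rho v}) makes it affine on each half with linear parts P, Q as
    above. The condition is clearly inherited by tau|tau', which gives (1) and
    (2). For (3), an automorphism of a regular subgroup of GA(s,2) provides,
    for every a, linear bijections L, M with rho (a + L b) = rho a + M (rho
    b); then y |-> c + (L|M)(y) is an automorphism of S_rho mapping 0 to any
    given codeword c, so Aut(S_rho) is transitive on S_rho, and together with
    coordinate transitivity also on the words c + e_i at distance one. *)

From Pilot Require Import Defs.
From mathcomp Require Import all_boot all_order all_fingroup all_algebra.
Set Implicit Arguments. Unset Strict Implicit. Unset Printing Implicit Defensive.
Import GRing.Theory.
Local Open Scope ring_scope.

Lemma natr_F2 n : n%:R = (odd n)%:R :> 'F_2.
Proof. by rewrite -Fp_nat_mod // modn2. Qed.

Lemma natr_F2_eq0 n : (n%:R == 0 :> 'F_2) = ~~ odd n.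
Proof. by rewrite natr_F2; case: (odd n). Qed.

Lemma F2_cases (k : 'F_2) : k = 0 \/ k = 1.
Proof. by case: k => -[|[|]] // ?; [left | right]; apply: val_inj. Qed.

Lemma F2_eq1 (k : 'F_2) : (k == 1) = (k != 0).
Proof. by case: k => -[|[|]]. Qed.

Lemma F2_neq (k l : 'F_2) : k != l -> k = l + 1.
Proof. by case: k l => -[|[|]] // ? [[|[|]] // ?] _; apply: val_inj. Qed.

Lemma addrr_F2 (k : 'F_2) : k + k = 0.
Proof. exact/addrr_pchar2/pchar_Fp. Qed.

Lemma ffun_addrr_F2 (T : finType) (x : {ffun T -> 'F_2}) : x + x = 0.
Proof. by apply/ffunP => i; rewrite !ffunE addrr_F2. Qed.

Lemma ffun_addrK_F2 (T : finType) (x y : {ffun T -> 'F_2}) : x + y + y = x.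
Proof. by rewrite -addrA ffun_addrr_F2 addr0. Qed.

Lemma addr_eq_self (V : zmodType) (u v : V) : (u + v == u) = (v == 0).
Proof. by rewrite -{2}[u]addr0 (inj_eq (addrI u)). Qed.

Section Char2Module.
Variable V : lmodType 'F_2.
Implicit Types u v : V.

Lemma addvv v : v + v = 0.
Proof. by rewrite -mulr2n -scaler_nat pchar_Fp_0 ?scale0r. Qed.

Lemma oppv v : - v = v.
Proof. by apply/eqP; rewrite eq_sym -subr_eq0 opprK addvv. Qed.

Lemma addKv u v : u + (u + v) = v.
Proof. by rewrite addrA addvv add0r. Qed.

Lemma addvK u v : v + u + u = v.
Proof. by rewrite -addrA addvv addr0. Qed.

Lemma addv_eq0 u v : (u + v == 0) = (u == v).
Proof. by rewrite -[u == v]subr_eq0 oppv. Qed.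

End Char2Module.

Section FinSetFacts.
Variable T : finType.
Implicit Types a b c d : T.

Lemma uniq4E a b c d :
  uniq [:: a; b; c; d] = [&& a != b, a != c, a != d, b != c, b != d & c != d].
Proof. by rewrite /= !inE !negb_or andbT -!andbA. Qed.

Lemma set4_seq a b c d : [set a; b; c; d] = [set x in [:: a; b; c; d]].
Proof. by apply/setP => x; rewrite !inE -!orbA. Qed.

Lemma card_set4 a b c d : uniq [:: a; b; c; d] -> #|[set a; b; c; d]| = 4%N.
Proof. by rewrite set4_seq cardsE => /card_uniqP. Qed.

Lemma card4P (X : {set T}) : #|X| = 4%N ->
  exists a b c d, uniq [:: a; b; c; d] /\ X = [set a; b; c; d].
Proof.
rewrite cardE => X4; have := enum_uniq (mem X).
case E: (enum X) X4 => [|a [|b [|c [|d [|? ?]]]]] // _ X_uniq.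
by exists a, b, c, d; split => //; apply/setP => x; rewrite set4_seq inE -E mem_enum.
Qed.

End FinSetFacts.

Section VecQuads.
Variable s : nat.
Implicit Types a b c d p q z : vec s.

Lemma sum_set2 a c : a != c -> \sum_(x in [set a; c]) x = a + c.
Proof. by move=> ac; rewrite big_setU1 ?inE // big_set1. Qed.

Lemma sum_set4 a b c d : uniq [:: a; b; c; d] ->
  \sum_(x in [set a; b; c; d]) x = a + b + c + d.
Proof.
move=> abcd; rewrite set4_seq (eq_bigl (mem [:: a; b; c; d])) => [|x]; last by rewrite inE.
by rewrite -big_uniq // !big_cons big_nil /= addr0 !addrA.
Qed.

Lemma uniq_quad p q z :
  uniq [:: p; q; z; p + q + z] = [&& p != q, p != z & q != z].
Proof.
have e1 : (p + q + z == p) = (q == z) by rewrite -addrA addr_eq_self addv_eq0.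
have e2 : (p + q + z == q) = (p == z) by rewrite (addrAC p) addrC addr_eq_self addv_eq0.
have e3 : (p + q + z == z) = (p == q) by rewrite addrC addr_eq_self addv_eq0.
rewrite uniq4E !(eq_sym _ (p + q + z)) e1 e2 e3.
by case: (p != q); case: (p != z); case: (q != z).
Qed.

End VecQuads.

(** * The code [S rho] *)

Section Syndrome.
Variable s : nat.
Implicit Types (a b v : vec s) (x y : Defs.half s) (f L : vec s -> vec s).

Definition syndrome x : vec s := \sum_a x a *: a.
Definition parity x : 'F_2 := \sum_a x a.

Lemma syndromeD x y : syndrome (x + y) = syndrome x + syndrome y.
Proof. by rewrite -big_split; apply: eq_bigr => a _; rewrite ffunE scalerDl. Qed.

Lemma parityD x y : parity (x + y) = parity x + parity y.
Proof. by rewrite -big_split; apply: eq_bigr => a _; rewrite ffunE. Qed.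

Lemma syndrome_unitv a : syndrome (unitv a) = a.
Proof.
rewrite /syndrome (bigD1 a) //= big1 => [|b /negbTE ba]; rewrite ffunE ?ba ?scale0r //.
by rewrite eqxx scale1r addr0.
Qed.

Lemma parity_unitv a : parity (unitv a) = 1.
Proof.
rewrite /parity (bigD1 a) //= big1 => [|b /negbTE ba]; rewrite ffunE ?ba //.
by rewrite eqxx addr0.
Qed.

Lemma syndrome_support x : syndrome x = \sum_(a | x a == 1) a.
Proof.
rewrite /syndrome (bigID (fun a => x a == 1)) /= [X in _ + X]big1 ?addr0.
  by apply: eq_bigr => a /eqP ->; rewrite scale1r.
by move=> a; rewrite F2_eq1 negbK => /eqP ->; rewrite scale0r.
Qed.

Lemma parity_support x : parity x = #|[set a | x a == 1]|%:R.
Proof.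
rewrite /parity (bigID (fun a => x a == 1)) /= [X in _ + X]big1 ?addr0.
  by rewrite (eq_bigr (fun _ => 1)) => [|a /eqP //]; rewrite sumr_const cardsE.
by move=> a; rewrite F2_eq1 negbK => /eqP.
Qed.

Lemma inHE x : inH x = (syndrome x == 0) && (parity x == 0).
Proof. by rewrite /inH syndrome_support parity_support natr_F2_eq0. Qed.

Lemma inCosetE x a b : inCoset x a b = (syndrome x == a + b) && (parity x == 0).
Proof.
apply/existsP/andP => [[h /andP[]]|[/eqP xS /eqP xP]].
  rewrite inHE => /andP[/eqP hS /eqP hP] /eqP ->.
  by rewrite !syndromeD !parityD hS hP !syndrome_unitv !parity_unitv !add0r addrr_F2.
exists (x + (unitv a + unitv b)).
rewrite inHE !syndromeD !parityD xS xP !syndrome_unitv !parity_unitv addvv addrr_F2.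
by rewrite -addrA -(addrA x) ffun_addrr_F2 !addr0 !eqxx.
Qed.

Lemma memS (rho : vec s -> vec s) (w : word s) : rho 0 = 0 ->
  (w \in S rho) = [&& parity (lhalf w) == 0, parity (rhalf w) == 0
                    & syndrome (rhalf w) == rho (syndrome (lhalf w))].
Proof.
move=> rho0; rewrite inE; apply/existsP/and3P => [[a]|[wlP wrP /eqP wrS]].
  rewrite !inCosetE rho0 !addr0 => /andP[/andP[/eqP-> ->] /andP[/eqP-> ->]].
  by rewrite !eqxx.
by exists (syndrome (lhalf w)); rewrite !inCosetE rho0 !addr0 wlP wrP wrS !eqxx.
Qed.

Lemma morph_add0 L : {morph L : u v / u + v} -> L 0 = 0.
Proof. by move=> L_add; apply: (@addrI _ (L 0)); rewrite -L_add !addr0. Qed.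

Lemma sum_linear x L : {morph L : u v / u + v} -> \sum_b x b *: L b = L (syndrome x).
Proof.
move=> L_add; rewrite /syndrome (big_morph L L_add (morph_add0 L_add)).
apply: eq_bigr => b _.
by case: (F2_cases (x b)) => ->; rewrite ?scale0r ?scale1r ?(morph_add0 L_add).
Qed.

Lemma sum_affine x L v : {morph L : u w / u + w} ->
  \sum_b x b *: (L b + v) = L (syndrome x) + parity x *: v.
Proof.
move=> L_add; rewrite -sum_linear // /parity scaler_suml -big_split.
by apply: eq_bigr => b _; rewrite scalerDr.
Qed.

Lemma syndrome_relabel x y f : injective f -> (forall b, y (f b) = x b) ->
  syndrome y = \sum_b x b *: f b.
Proof.
by move=> f_inj yf; rewrite /syndrome (reindex_inj f_inj); apply: eq_bigr => b _; rewrite yf.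
Qed.

Lemma parity_relabel x y f : injective f -> (forall b, y (f b) = x b) ->
  parity y = parity x.
Proof.
by move=> f_inj yf; rewrite /parity (reindex_inj f_inj); apply: eq_bigr => b _; rewrite yf.
Qed.

End Syndrome.

Section PositionPerms.
Variable s : nat.
Implicit Types (a b v w : vec s) (y : word s) (pi : {perm pos s}).

Lemma lhalf_permw pi y a p : pi p = inl a -> lhalf (permw pi y) a = y p.
Proof. by move=> pi_p; rewrite !ffunE -pi_p permK. Qed.

Lemma rhalf_permw pi y b p : pi p = inr b -> rhalf (permw pi y) b = y p.
Proof. by move=> pi_p; rewrite !ffunE -pi_p permK. Qed.

Lemma permwK pi : cancel (permw pi) (permw pi^-1).
Proof. by move=> y; apply/ffunP => p; rewrite !ffunE invgK permK. Qed.

Lemma permwD pi y y' : permw pi (y + y') = permw pi y + permw pi y'.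
Proof. by apply/ffunP => p; rewrite !ffunE. Qed.

Lemma permwM pi pi' y : permw (pi * pi')%g y = permw pi' (permw pi y).
Proof. by apply/ffunP => p; rewrite !ffunE invMg permM. Qed.

Lemma lhalfD (w w' : word s) : lhalf (w + w') = lhalf w + lhalf w'.
Proof. by apply/ffunP => a; rewrite !ffunE. Qed.

Lemma rhalfD (w w' : word s) : rhalf (w + w') = rhalf w + rhalf w'.
Proof. by apply/ffunP => a; rewrite !ffunE. Qed.

Lemma in_PAutI (C : {set word s}) pi :
  (forall y, y \in C -> permw pi y \in C) -> in_PAut C pi.
Proof.
move=> piC; rewrite /in_PAut eqEcard card_imset; last exact: can_inj (permwK pi).
by rewrite leqnn andbT; apply/subsetP => _ /imsetP[y yC ->]; apply: piC.
Qed.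

Section SideMaps.
Variables (f g : vec s -> vec s) (f_inj : injective f) (g_inj : injective g).

Definition side_map (p : pos s) : pos s :=
  match p with inl a => inl (f a) | inr b => inr (g b) end.

Definition cross_map (p : pos s) : pos s :=
  match p with inl a => inr (f a) | inr b => inl (g b) end.

Lemma side_map_inj : injective side_map.
Proof. by move=> [a|b] [a'|b'] //= [] => [/f_inj|/g_inj] ->. Qed.

Lemma cross_map_inj : injective cross_map.
Proof. by move=> [a|b] [a'|b'] //= [] => [/f_inj|/g_inj] ->. Qed.

Definition side_perm : {perm pos s} := perm side_map_inj.
Definition cross_perm : {perm pos s} := perm cross_map_inj.

Lemma lhalf_side_perm y a : lhalf (permw side_perm y) (f a) = lhalf y a.
Proof. by rewrite (@lhalf_permw _ y _ (inl a)) ?ffunE // permE. Qed.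

Lemma rhalf_side_perm y b : rhalf (permw side_perm y) (g b) = rhalf y b.
Proof. by rewrite (@rhalf_permw _ y _ (inr b)) ?ffunE // permE. Qed.

Lemma lhalf_cross_perm y b : lhalf (permw cross_perm y) (g b) = rhalf y b.
Proof. by rewrite (@lhalf_permw _ y _ (inr b)) ?ffunE // permE. Qed.

Lemma rhalf_cross_perm y a : rhalf (permw cross_perm y) (f a) = lhalf y a.
Proof. by rewrite (@rhalf_permw _ y _ (inl a)) ?ffunE // permE. Qed.

End SideMaps.

Definition translation v w : {perm pos s} := side_perm (addIr v) (addIr w).

End PositionPerms.

Definition swappable s (rho : vec s -> vec s) := exists P Q : vec s -> vec s,
  [/\ {morph P : u v / u + v}, {morph Q : u v / u + v}, injective P, injective Q &
      forall v, rho (Q (rho v)) = P v].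

Section CodePerms.
Variables (s : nat) (rho : vec s -> vec s).
Hypothesis rho0 : rho 0 = 0.
Implicit Types (v w : vec s) (y : word s).

Lemma translation_PAut v w : in_PAut (S rho) (translation v w).
Proof.
apply: in_PAutI => y; rewrite !memS // => /and3P[/eqP ylP /eqP yrP /eqP yrS].
have Tl := lhalf_side_perm (addIr v) (addIr w) y.
have Tr := rhalf_side_perm (addIr v) (addIr w) y.
rewrite (parity_relabel (addIr v) Tl) (parity_relabel (addIr w) Tr) ylP yrP !eqxx /=.
rewrite (syndrome_relabel (addIr v) Tl) (syndrome_relabel (addIr w) Tr).
by rewrite !(sum_affine _ (L := id)) // ylP yrP !scale0r !addr0 yrS.
Qed.

Section SwapPerm.
Variables P Q : vec s -> vec s.
Hypotheses (P_add : {morph P : u v / u + v}) (Q_add : {morph Q : u v / u + v}).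
Hypotheses (P_inj : injective P) (Q_inj : injective Q).
Hypothesis rhoQrho : forall v, rho (Q (rho v)) = P v.

Definition swap_perm v w : {perm pos s} :=
  cross_perm (inj_comp (addIr w) P_inj) (inj_comp (addIr v) Q_inj).

Lemma swap_PAut v w : in_PAut (S rho) (swap_perm v w).
Proof.
apply: in_PAutI => y; rewrite !memS // => /and3P[/eqP ylP /eqP yrP /eqP yrS].
pose Pw_inj := inj_comp (addIr w) P_inj; pose Qv_inj := inj_comp (addIr v) Q_inj.
have Xl := lhalf_cross_perm Pw_inj Qv_inj y; have Xr := rhalf_cross_perm Pw_inj Qv_inj y.
rewrite (parity_relabel Qv_inj Xl) (parity_relabel Pw_inj Xr) ylP yrP !eqxx /=.
rewrite (syndrome_relabel Qv_inj Xl) (syndrome_relabel Pw_inj Xr) /= !sum_affine //.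
by rewrite ylP yrP !scale0r !addr0 yrS rhoQrho.
Qed.

End SwapPerm.

End CodePerms.

Lemma swappable_coord_transitive s (rho : vec s -> vec s) :
  rho 0 = 0 -> swappable rho -> coord_transitive (S rho).
Proof.
move=> rho0 [P [Q [P_add Q_add P_inj Q_inj rhoQrho]]].
have swap_PAut := swap_PAut rho0 P_add Q_add P_inj Q_inj rhoQrho.
case=> [a|b] [a'|b'].
- by exists (translation (a + a') 0); rewrite translation_PAut // permE /= addKv.
- by exists (swap_perm P_inj Q_inj 0 (P a + b')); rewrite swap_PAut permE /= addKv.
- by exists (swap_perm P_inj Q_inj (Q b + a') 0); rewrite swap_PAut permE /= addKv.
- by exists (translation 0 (b + b')); rewrite translation_PAut // permE /= addKv.
Qed.

(** * Blocks of [SQS rho] *)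

Section Parts.
Variable s : nat.
Implicit Types (a b : vec s) (B : {set pos s}).

Definition lpart B : {set vec s} := [set a | inl a \in B].
Definition rpart B : {set vec s} := [set b | inr b \in B].

Lemma card_parts B : #|B| = (#|lpart B| + #|rpart B|)%N.
Proof.
by rewrite -!sum1_card big_sumType; congr (_ + _)%N; apply: eq_bigl => a; rewrite inE.
Qed.

Lemma eq_parts B B' : lpart B = lpart B' -> rpart B = rpart B' -> B = B'.
Proof.
move=> /setP eqL /setP eqR; apply/setP => -[a|b].
  by have := eqL a; rewrite !inE.
by have := eqR b; rewrite !inE.
Qed.

Lemma lpartU B B' : lpart (B :|: B') = lpart B :|: lpart B'.
Proof. by apply/setP => a; rewrite !inE. Qed.

Lemma rpartU B B' : rpart (B :|: B') = rpart B :|: rpart B'.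
Proof. by apply/setP => a; rewrite !inE. Qed.

Lemma lpart_inl a : lpart [set inl a] = [set a].
Proof. by apply/setP => x; rewrite !inE. Qed.

Lemma lpart_inr b : lpart [set inr b] = set0.
Proof. by apply/setP => x; rewrite !inE. Qed.

Lemma rpart_inl a : rpart [set inl a] = set0.
Proof. by apply/setP => x; rewrite !inE. Qed.

Lemma rpart_inr b : rpart [set inr b] = [set b].
Proof. by apply/setP => x; rewrite !inE. Qed.

Definition partsE :=
  (lpartU, rpartU, lpart_inl, lpart_inr, rpart_inl, rpart_inr, set0U, setU0).

End Parts.

Section SQSBlocks.
Variables (s : nat) (rho : vec s -> vec s).
Hypothesis rho0 : rho 0 = 0.
Implicit Types (a b c d : vec s) (B : {set pos s}).

Lemma SQSP B : reflect (exists a b c d,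
    [\/ [/\ uniq [:: a; b; c; d], a + b + c + d = 0 & B = [set inl a; inl b; inl c; inl d]],
        [/\ uniq [:: a; b; c; d], a + b + c + d = 0 & B = [set inr a; inr b; inr c; inr d]] |
        [/\ rho (a + c) = b + d, b + d != 0 & B = [set inl a; inl c; inr b; inr d]]])
  (B \in SQS rho).
Proof.
rewrite inE; apply: (iffP existsP) => [[a /existsP[b /existsP[c /existsP[d]]]] | ].
  rewrite -uniq4E => /orP[/and3P[abcd /eqP sum0 /orP[]/eqP BE] | /and3P[/eqP rac bd /eqP BE]].
  - by exists a, b, c, d; constructor 1.
  - by exists a, b, c, d; constructor 2.
  - by exists a, b, c, d; constructor 3.
move=> [a [b [c [d B_cases]]]]; exists a; apply/existsP; exists b; apply/existsP; exists c.
apply/existsP; exists d; rewrite -uniq4E.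
by case: B_cases => -[-> -> ->]; rewrite ?eqxx ?orbT.
Qed.

Lemma SQS_blockP B : B \in SQS rho ->
  [/\ #|B| = 4%N, ~~ odd #|lpart B|, ~~ odd #|rpart B|
    & rho (\sum_(a in lpart B) a) = \sum_(b in rpart B) b].
Proof.
case/SQSP => a [b [c [d [[abcd sum0 ->] | [abcd sum0 ->] | [rac bd0 ->]]]]];
  rewrite card_parts !partsE.
- by rewrite card_set4 // cards0 big_set0 sum_set4 // sum0 rho0.
- by rewrite card_set4 // cards0 big_set0 sum_set4 // sum0 rho0.
have ac : a != c by apply: contraNneq bd0 => ac; rewrite -rac ac addvv rho0.
have bd : b != d by rewrite -addv_eq0.
by rewrite !cards2 ac bd !sum_set2.
Qed.

Hypothesis rho_inj : injective rho.

Lemma SQS_blockI B : #|B| = 4%N -> ~~ odd #|lpart B| ->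
  rho (\sum_(a in lpart B) a) = \sum_(b in rpart B) b -> B \in SQS rho.
Proof.
move=> B4 evenL sumLR; have LR4 : (#|lpart B| + #|rpart B| = 4)%N by rewrite -card_parts.
have R_card : #|rpart B| = (4 - #|lpart B|)%N by rewrite -LR4 addKn.
have [L0 | L2 | L4] : [\/ #|lpart B| = 0, #|lpart B| = 2 | #|lpart B| = 4]%N.
  have : (#|lpart B| <= 4)%N by rewrite -LR4 leq_addr.
  move: evenL; case: #|lpart B| => [|[|[|[|[|n]]]]] // _ _;
    by [constructor 1 | constructor 2 | constructor 3].
- have /card4P[a [b [c [d [abcd R_eq]]]]] : #|rpart B| = 4%N by rewrite R_card L0.
  have L_eq : lpart B = set0 by apply: cards0_eq.
  apply/SQSP; exists a, b, c, d; constructor 2; split => //.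
    by rewrite -sum_set4 // -R_eq -sumLR L_eq big_set0 rho0.
  by apply: eq_parts; rewrite !partsE ?L_eq ?R_eq.
- have /cards2P[a [c [ac L_eq]]] : #|lpart B| == 2 by rewrite L2.
  have /cards2P[b [d [bd R_eq]]] : #|rpart B| == 2 by rewrite R_card L2.
  apply/SQSP; exists a, b, c, d; constructor 3; split.
  + by rewrite -!sum_set2 // -L_eq -R_eq.
  + by rewrite addv_eq0.
  + by apply: eq_parts; rewrite !partsE ?L_eq ?R_eq.
- have /card4P[a [b [c [d [abcd L_eq]]]]] := L4.
  have R_eq : rpart B = set0 by apply: cards0_eq; rewrite R_card L4.
  apply/SQSP; exists a, b, c, d; constructor 1; split => //.
    by apply: rho_inj; rewrite -sum_set4 // -L_eq sumLR R_eq big_set0 rho0.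
  by apply: eq_parts; rewrite !partsE ?L_eq ?R_eq.
Qed.

End SQSBlocks.

Section CharWord.
Variable s : nat.
Implicit Types (A : {set vec s}) (B : {set pos s}).

Definition indicator A : Defs.half s := [ffun a => (a \in A)%:R].
Definition char_word B : word s := [ffun p => (p \in B)%:R].

Lemma syndrome_indicator A : syndrome (indicator A) = \sum_(a in A) a.
Proof. by rewrite syndrome_support; apply: eq_bigl => a; rewrite ffunE; case: (a \in A). Qed.

Lemma parity_indicator A : parity (indicator A) = #|A|%:R.
Proof.
rewrite parity_support (_ : [set a | _] = A) //.
by apply/setP => a; rewrite inE ffunE; case: (a \in A).
Qed.

Lemma lhalf_char_word B : lhalf (char_word B) = indicator (lpart B).
Proof. by apply/ffunP => a; rewrite !ffunE inE. Qed.

Lemma rhalf_char_word B : rhalf (char_word B) = indicator (rpart B).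
Proof. by apply/ffunP => a; rewrite !ffunE inE. Qed.

Lemma permw_char_word (pi : {perm pos s}) B : permw pi (char_word B) = char_word (pi @: B).
Proof. by apply/ffunP => p; rewrite !ffunE -{2}(permKV pi p) mem_imset //; apply: perm_inj. Qed.

End CharWord.

Lemma mem_SQS_char_word s (rho : vec s -> vec s) B : rho 0 = 0 -> injective rho ->
  (B \in SQS rho) = (#|B| == 4%N) && (char_word B \in S rho).
Proof.
move=> rho0 rho_inj; rewrite memS // lhalf_char_word rhalf_char_word.
rewrite !parity_indicator !syndrome_indicator !natr_F2_eq0.
apply/idP/and4P => [/(SQS_blockP rho0)[-> -> -> ->] | [/eqP B4 evenL _ /eqP sumLR]].
  by rewrite eqxx.
exact: SQS_blockI.
Qed.

Section SQSAut.
Variable s : nat.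
Implicit Types (Q : {set {set pos s}}) (g h : {perm pos s}).

Lemma sqs_autP Q g B : sqs_aut Q g -> B \in Q -> g @: B \in Q.
Proof. by move=> /eqP gQ QB; rewrite -gQ; apply: imset_f. Qed.

Lemma sqs_autI Q g : (forall B, B \in Q -> g @: B \in Q) -> sqs_aut Q g.
Proof.
move=> gQ; rewrite /sqs_aut eqEcard card_imset; last exact/imset_inj/perm_inj.
by rewrite leqnn andbT; apply/subsetP => _ /imsetP[B QB ->]; apply: gQ.
Qed.

Lemma sqs_autM Q g h : sqs_aut Q g -> sqs_aut Q h -> sqs_aut Q (g * h)%g.
Proof.
move=> gQ hQ; apply: sqs_autI => B QB.
rewrite (eq_imset _ (permM g h)) imset_comp.
by apply: sqs_autP hQ _; apply: sqs_autP gQ _.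
Qed.

Lemma sqs_autV Q g : sqs_aut Q g -> sqs_aut Q g^-1%g.
Proof.
move=> gQ; apply: sqs_autI => C; rewrite -{1}(eqP gQ) => /imsetP[B QB ->].
by rewrite -imset_comp (eq_imset _ (permK g)) imset_id.
Qed.

End SQSAut.

Section PAutSQS.
Variables (s : nat) (rho : vec s -> vec s).
Hypotheses (rho0 : rho 0 = 0) (rho_inj : injective rho).

Lemma PAut_sqs_aut pi : in_PAut (S rho) pi -> sqs_aut (SQS rho) pi.
Proof.
move=> /eqP piS; apply: sqs_autI => B; rewrite !mem_SQS_char_word //.
rewrite card_imset; last exact: perm_inj.
by case/andP=> -> SB; rewrite -piS -permw_char_word imset_f.
Qed.

Lemma coord_transitive_point_transitive :
  coord_transitive (S rho) -> point_transitive (SQS rho).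
Proof. by move=> CT p q; have [pi [/PAut_sqs_aut piQ <-]] := CT p q; exists pi. Qed.

Lemma translation_sqs_aut v w : sqs_aut (SQS rho) (translation v w).
Proof. exact/PAut_sqs_aut/translation_PAut. Qed.

End PAutSQS.

(** * Point transitivity forces swappability *)

Definition is_inl s (p : pos s) := if p is inl _ then true else false.

Definition swaps_sides s (phi : {perm pos s}) := forall p, is_inl (phi p) = ~~ is_inl p.

Lemma swaps_sidesP s (phi : {perm pos s}) : swaps_sides phi ->
  exists alpha beta : vec s -> vec s, [/\ injective alpha, injective beta,
    forall a, phi (inl a) = inr (alpha a) & forall b, phi (inr b) = inl (beta b)].
Proof.
move=> phi_swaps.
pose alpha (a : vec s) : vec s := if phi (inl a) is inr b then b else 0.
pose beta (b : vec s) : vec s := if phi (inr b) is inl a then a else 0.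
have phi_l a : phi (inl a) = inr (alpha a).
  by have := phi_swaps (inl a); rewrite /alpha; case: (phi (inl a)).
have phi_r b : phi (inr b) = inl (beta b).
  by have := phi_swaps (inr b); rewrite /beta; case: (phi (inr b)).
exists alpha, beta; split => // [a a' | b b'] eq_ab.
  by have /perm_inj[] : phi (inl a) = phi (inl a') by rewrite !phi_l eq_ab.
by have /perm_inj[] : phi (inr b) = phi (inr b') by rewrite !phi_r eq_ab.
Qed.

Section SwappingAut.
Variables (s : nat) (rho : vec s -> vec s).
Hypotheses (rho0 : rho 0 = 0) (rho_inj : injective rho).
Implicit Types (x y v : vec s) (phi : {perm pos s}).

Lemma additive_of_quads (f : vec s -> vec s) :
  (forall x y, uniq [:: 0; x; y; x + y] -> f 0 + f x + f y + f (x + y) = 0) ->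
  {morph (fun x => f x + f 0) : x y / x + y}.
Proof.
move=> f_quad x y /=.
have [-> | x0] := eqVneq x 0; first by rewrite add0r addvv add0r.
have [-> | y0] := eqVneq y 0; first by rewrite addr0 addvv addr0.
have [<- | xy] := eqVneq x y; first by rewrite !addvv.
have := uniq_quad 0 x y; rewrite add0r !(eq_sym 0) x0 y0 xy => /f_quad /eqP.
rewrite addv_eq0 => /eqP <-.
by rewrite (addrC (f 0)) (addrAC (f x)) addvK addrACA addvv addr0.
Qed.

(* The blocks {0,x,y,x+y} of either half make both components of phi affine,
   and the mixed blocks ({0,v},{0,rho v}) link their linear parts. *)
Lemma swaps_sides_swappable phi :
  sqs_aut (SQS rho) phi -> swaps_sides phi -> swappable rho.
Proof.
move=> phi_aut /swaps_sidesP[alpha [beta [alpha_inj beta_inj phi_l phi_r]]].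
have phi_block B : B \in SQS rho ->
    rho (\sum_(a in lpart (phi @: B)) a) = \sum_(b in rpart (phi @: B)) b.
  by move=> /(sqs_autP phi_aut) /(SQS_blockP rho0)[].
exists (fun x => alpha x + alpha 0), (fun y => beta y + beta 0); split.
- apply: additive_of_quads => x y xy_uniq; apply/esym.
  have := phi_block [set inl 0; inl x; inl y; inl (x + y)].
  rewrite !imsetU !imset_set1 !phi_l !partsE big_set0 rho0 sum_set4; last first.
    by rewrite (map_inj_uniq alpha_inj [:: _; _; _; _]).
  by apply; apply/SQSP; exists 0, x, y, (x + y); constructor 1; rewrite add0r addvv.
- apply: additive_of_quads => x y xy_uniq; apply: rho_inj; rewrite rho0.
  have := phi_block [set inr 0; inr x; inr y; inr (x + y)].
  rewrite !imsetU !imset_set1 !phi_r !partsE big_set0 sum_set4; last first.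
    by rewrite (map_inj_uniq beta_inj [:: _; _; _; _]).
  by apply; apply/SQSP; exists 0, x, y, (x + y); constructor 2; rewrite add0r addvv.
- exact: inj_comp (addIr _) alpha_inj.
- exact: inj_comp (addIr _) beta_inj.
move=> v; have [-> | v0] := eqVneq v 0; first by rewrite rho0 !addvv rho0.
have rv0 : rho v != 0 by rewrite -rho0 (inj_eq rho_inj).
have := phi_block [set inl 0; inl v; inr 0; inr (rho v)].
rewrite !imsetU !imset_set1 !phi_l !phi_r !partsE !sum_set2; first last.
- by rewrite (inj_eq beta_inj) eq_sym.
- by rewrite (inj_eq alpha_inj) eq_sym.
rewrite addrC => ->; first exact: addrC.
by apply/SQSP; exists 0, 0, v, (rho v); constructor 3; rewrite !add0r; split.
Qed.

End SwappingAut.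

Section PointTransitive.
Variables (s : nat) (rho : {perm vec s}).
Hypothesis rho0 : rho 0 = 0.
Implicit Types (p q z b : vec s) (X Y Z : pos s).

Lemma same_side_swap X Y : X != Y -> is_inl X = is_inl Y ->
  exists t, [/\ sqs_aut (SQS rho) t, t X = Y, t Y = X &
    forall Z, Z != X -> Z != Y -> [set X; Y; Z; t Z] \in SQS rho].
Proof.
have rho_inj := @perm_inj _ rho.
have quad_uniq p q z : p != q -> z != p -> z != q -> uniq [:: p; q; z; z + (p + q)].
  by move=> pq zp zq; rewrite addrC uniq_quad pq !(eq_sym _ z) zp zq.
have pq0 p q : p != q -> p + q != 0 by rewrite addv_eq0.
case: X Y => [p|p] [q|q] //= pq _.
- exists (translation (p + q) (rho (p + q))); split.
  + exact: translation_sqs_aut.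
  + by rewrite permE /= addKv.
  + by rewrite permE /= (addrC p) addKv.
  case=> [z|b] zp zq; rewrite permE /=; apply/SQSP.
  + exists p, q, z, (z + (p + q)); constructor 1; split => //; first exact: quad_uniq.
    by rewrite -addrA addKv addvv.
  + exists p, b, q, (b + rho (p + q)); constructor 3.
    by rewrite addKv -rho0 (inj_eq rho_inj) pq0.
- set v := (rho^-1)%g (p + q); have rho_v : rho v = p + q by rewrite permKV.
  exists (translation v (p + q)); split.
  + exact: translation_sqs_aut.
  + by rewrite permE /= addKv.
  + by rewrite permE /= (addrC p) addKv.
  case=> [z|b] zp zq; rewrite permE /=; apply/SQSP.
  + exists z, p, (z + v), q; constructor 3; rewrite addKv rho_v pq0 //; split => //.
    by apply: eq_parts; rewrite !partsE setUC.
  + exists p, q, b, (b + (p + q)); constructor 2; split => //; first exact: quad_uniq.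
    by rewrite -addrA addKv addvv.
Qed.

(* A block through a point of each half has two points in each half. *)
Lemma block_swap_swaps_sides (N : {perm pos s}) x y :
  N (inl x) = inr y -> N (inr y) = inl x ->
  (forall Z, Z != inl x -> Z != inr y -> [set inl x; inr y; Z; N Z] \in SQS rho) ->
  swaps_sides N.
Proof.
move=> Nx Ny Nblock [a|b] /=.
  have [-> | ax] := eqVneq a x; first by rewrite Nx.
  have := Nblock (inl a) ax isT; case: (N (inl a)) => // w.
  by case/(SQS_blockP rho0); rewrite !partsE cards1.
have [-> | yb] := eqVneq b y; first by rewrite Ny.
have := Nblock (inr b) isT yb; case: (N (inr b)) => // w.
by case/(SQS_blockP rho0); rewrite !partsE cards1.
Qed.

(* Take h with h (inr 0) = inl 0.  Either h exchanges the halves, or it maps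
   a point of each half into the same half; then conjugating by h the
   translation that swaps the two images exchanges the halves. *)
Lemma point_transitive_swaps : point_transitive (SQS rho) ->
  exists phi, sqs_aut (SQS rho) phi /\ swaps_sides phi.
Proof.
move=> PT; have [h [h_aut h0]] := PT (inr 0) (inl 0).
case: (boolP [exists x, exists y, is_inl (h (inl x)) == is_inl (h (inr y))]).
  case/existsP=> x /existsP[y /eqP same].
  have [|t [t_aut tX tY tZ]] := same_side_swap _ same; first by rewrite (inj_eq perm_inj).
  exists (h * t * h^-1)%g; split; first by rewrite !sqs_autM ?sqs_autV.
  apply: (@block_swap_swaps_sides _ x y); rewrite ?permM ?tX ?tY ?permK // => Z Zx Zy.
  have := sqs_autP (sqs_autV h_aut) (tZ (h Z) _ _); rewrite !(inj_eq perm_inj).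
  by rewrite !imsetU !imset_set1 !permK !permM; apply.
rewrite negb_exists => /forallP sides.
have side x y : is_inl (h (inl x)) != is_inl (h (inr y)) by have /existsPn := sides x.
have l0 : is_inl (h (inl 0)) = false by have := side 0 0; rewrite h0; case: is_inl.
exists h; split => // -[a|b] /=.
  by have := side a 0; rewrite h0; case: is_inl.
by have := side 0 b; rewrite l0; case: is_inl.
Qed.

End PointTransitive.

Lemma point_transitive_swappable s (rho : {perm vec s}) :
  rho 0 = 0 -> point_transitive (SQS rho) -> swappable rho.
Proof.
move=> rho0 /(point_transitive_swaps rho0)[phi [phi_aut phi_swaps]].
exact: swaps_sides_swappable rho0 (@perm_inj _ rho) phi phi_aut phi_swaps.
Qed.

Lemma coord_transitive_swappable s (rho : {perm vec s}) :
  rho 0 = 0 -> coord_transitive (S rho) -> swappable rho.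
Proof.
move=> rho0 /(coord_transitive_point_transitive rho0 (@perm_inj _ rho)).
exact: point_transitive_swappable.
Qed.

(** * Concatenation *)

Section Concatenation.
Variables r r' : nat.
Implicit Types (f g : vec r -> vec r) (z : vec (r + r')).

Lemma catperm0 f (f' : vec r' -> vec r') : f 0 = 0 -> f' 0 = 0 -> catperm f f' 0 = 0.
Proof. by move=> f0 f'0; rewrite /catperm !linear0 f0 f'0 row_mx0. Qed.

Lemma catperm_inj f (f' : vec r' -> vec r') :
  injective f -> injective f' -> injective (catperm f f').
Proof.
move=> f_inj f'_inj z z' /eq_row_mx[/f_inj eq_l /f'_inj eq_r].
by rewrite -[z]hsubmxK -[z']hsubmxK eq_l eq_r.
Qed.

Lemma catperm_morphD f (f' : vec r' -> vec r') :
  {morph f : u v / u + v} -> {morph f' : u v / u + v} -> {morph catperm f f' : u v / u + v}.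
Proof. by move=> f_add f'_add z z'; rewrite /catperm !linearD f_add f'_add add_row_mx. Qed.

Lemma catperm_comp f g (f' g' : vec r' -> vec r') z :
  catperm f f' (catperm g g' z) = catperm (f \o g) (f' \o g') z.
Proof. by rewrite /catperm row_mxKl row_mxKr. Qed.

Lemma swappable_catperm f (f' : vec r' -> vec r') :
  swappable f -> swappable f' -> swappable (catperm f f').
Proof.
move=> [P [Q [P_add Q_add P_inj Q_inj fQf]]] [P' [Q' [P'_add Q'_add P'_inj Q'_inj f'Q'f']]].
exists (catperm P P'), (catperm Q Q'); split; try exact: catperm_morphD; try exact: catperm_inj.
by move=> z; rewrite !catperm_comp /catperm /= fQf f'Q'f'.
Qed.

End Concatenation.

(** * Neighbor transitivity *)

Section CodeAut.
Variable s : nat.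
Implicit Types (C : {set word s}) (x y c u v : word s) (pi : {perm pos s}) (i : pos s).

Lemma in_AutP C x pi y : in_Aut C x pi -> y \in C -> x + permw pi y \in C.
Proof. by move=> /eqP xpiC yC; rewrite -xpiC; apply: imset_f. Qed.

Lemma in_AutI C x pi : (forall y, y \in C -> x + permw pi y \in C) -> in_Aut C x pi.
Proof.
move=> xpiC; rewrite /in_Aut eqEcard card_imset; last first.
  by move=> y y' /addrI /(can_inj (permwK pi)).
by rewrite leqnn andbT; apply/subsetP => _ /imsetP[y yC ->]; apply: xpiC.
Qed.

Lemma in_AutM C x pi x' pi' : in_Aut C x pi -> in_Aut C x' pi' ->
  in_Aut C (x' + permw pi' x) (pi * pi')%g.
Proof.
move=> A A'; apply: in_AutI => y yC.
by rewrite permwM -addrA -permwD; apply: in_AutP A' (in_AutP A yC).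
Qed.

Lemma in_AutV C x pi : in_Aut C x pi -> in_Aut C (permw pi^-1 x) pi^-1%g.
Proof.
move=> A; apply: in_AutI => z; rewrite -{1}(eqP A) => /imsetP[y yC ->].
by rewrite -permwD addrA ffun_addrr_F2 add0r permwK.
Qed.

Lemma in_Aut_PAut C pi : in_PAut C pi -> in_Aut C 0 pi.
Proof. by move=> /eqP piC; apply: in_AutI => y yC; rewrite add0r -piC imset_f. Qed.

Lemma Aut_transitive_code C :
  (forall c, c \in C -> exists pi, in_Aut C c pi) -> Aut_transitive_on C C.
Proof.
move=> autC u v uC vC; have [pu Au] := autC u uC; have [pv Av] := autC v vC.
exists (v + permw pv (permw pu^-1 u)), (pu^-1 * pv)%g.
by split; [apply: in_AutM (in_AutV Au) Av | rewrite permwM ffun_addrK_F2].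
Qed.

Definition unitw i : word s := [ffun j => (j == i)%:R].

Lemma permw_unitw pi i : permw pi (unitw i) = unitw (pi i).
Proof. by apply/ffunP => j; rewrite !ffunE -(inj_eq (@perm_inj _ pi)) permKV. Qed.

Lemma neighborsP C u : u \in neighbors C -> exists c i, c \in C /\ u = c + unitw i.
Proof.
rewrite inE => /andP[_ /existsP[c /andP[cC /cards1P[i diff_i]]]].
exists c, i; split => //; apply/ffunP => j; rewrite !ffunE.
have /setP/(_ j) := diff_i; rewrite !inE.
by have [-> /F2_neq // | _ /negbFE/eqP ->] := eqVneq j i; rewrite addr0.
Qed.

Lemma Aut_transitive_neighbors C : coord_transitive C ->
  (forall c, c \in C -> exists pi, in_Aut C c pi) -> Aut_transitive_on C (neighbors C).
Proof.
move=> CT autC _ _ /neighborsP[c [i [cC ->]]] /neighborsP[c' [j [c'C ->]]].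
have [p1 A1] := autC c cC; have [p3 A3] := autC c' c'C.
have [p2 [/in_Aut_PAut A2 p2i]] := CT (p1^-1 i)%g (p3^-1 j)%g.
eexists; exists (p1^-1 * p2 * p3)%g; split.
  exact: in_AutM (in_AutM (in_AutV A1) A2) A3.
by rewrite !permwM add0r !permwD !permw_unitw p2i permKV addrA ffun_addrK_F2.
Qed.

End CodeAut.

Definition affinely_homogeneous s (rho : vec s -> vec s) :=
  forall a, exists L M : vec s -> vec s,
    [/\ {morph L : u v / u + v}, {morph M : u v / u + v}, injective L, injective M &
        forall b, rho (a + L b) = rho a + M (rho b)].

Lemma homogeneous_code_aut s (rho : vec s -> vec s) : rho 0 = 0 ->
  affinely_homogeneous rho -> forall c, c \in S rho -> exists pi, in_Aut (S rho) c pi.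
Proof.
move=> rho0 hom c; rewrite memS // => /and3P[/eqP clP /eqP crP /eqP crS].
have [L [M [L_add M_add L_inj M_inj rhoLM]]] := hom (syndrome (lhalf c)).
exists (side_perm L_inj M_inj); apply: in_AutI => y.
have pil := lhalf_side_perm L_inj M_inj y; have pir := rhalf_side_perm L_inj M_inj y.
rewrite !memS // => /and3P[/eqP ylP /eqP yrP /eqP yrS].
rewrite lhalfD rhalfD !parityD !syndromeD (parity_relabel L_inj pil) (parity_relabel M_inj pir).
rewrite (syndrome_relabel L_inj pil) (syndrome_relabel M_inj pir) !sum_linear //.
by rewrite clP crP ylP yrP !addr0 crS yrS rhoLM !eqxx.
Qed.

Lemma homogeneous_catperm r r' (f : vec r -> vec r) (f' : vec r' -> vec r') :
  affinely_homogeneous f -> affinely_homogeneous f' -> affinely_homogeneous (catperm f f').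
Proof.
move=> hom hom' a /=.
have [L [M [L_add M_add L_inj M_inj fLM]]] := hom (lsubmx a).
have [L' [M' [L'_add M'_add L'_inj M'_inj f'LM]]] := hom' (rsubmx a).
exists (catperm L L'), (catperm M M'); split; try exact: catperm_morphD; try exact: catperm_inj.
by move=> b; rewrite !catperm_comp /catperm !linearD /= row_mxKl row_mxKr fLM f'LM add_row_mx.
Qed.

Lemma GA_affine s (g : {perm vec s}) : g \in GA s ->
  exists2 M : 'M['F_2]_s, M \in unitmx & forall b, g b = g 0 + b *m M.
Proof.
rewrite inE => /existsP[a /existsP[M /andP[M_unit /forallP gE]]].
by exists M => // b; rewrite (eqP (gE b)) (eqP (gE 0)) mul0mx addr0.
Qed.

Lemma regular_aut_homogeneous s (rho : vec s -> vec s) :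
  induced_by_regular_aut rho -> affinely_homogeneous rho.
Proof.
move=> [G [/subsetP G_GA G_reg [T [T_aut T0]]]] a.
have [g [[gG g0] _]] := G_reg 0 a.
have [M M_unit gE] := GA_affine (G_GA _ gG).
have [M' M'_unit TgE] := GA_affine (G_GA _ (Aut_closed T_aut gG)).
exists (fun u => u *m M), (fun u => u *m M'); split.
- by move=> u v; rewrite mulmxDl.
- by move=> u v; rewrite mulmxDl.
- exact: can_inj (mulmxK M_unit).
- exact: can_inj (mulmxK M'_unit).
move=> b; have [h [[hG h0] _]] := G_reg 0 b.
have /morphicP T_morph := Aut_morphic T_aut.
(* Evaluate T (h * g) at 0, once via T0 and once as (T g) (T h 0). *)
have := T0 _ (groupM hG gG).
by rewrite T_morph // !permM h0 T0 // h0 TgE T0 // g0 gE g0 => <-.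
Qed.

Unset Implicit Arguments.

Theorem theorem6 (r r' : nat) (hr : (0 < r)%N) (hr' : (0 < r')%N)
  (tau : {perm vec r}) (tau' : {perm vec r'})
  (htau : tau 0 = 0) (htau' : tau' 0 = 0) :
  [/\ (point_transitive (SQS tau) -> point_transitive (SQS tau') ->
       point_transitive (SQS (catperm tau tau'))),
      (coord_transitive (S tau) -> coord_transitive (S tau') ->
       coord_transitive (S (catperm tau tau')))
    & (induced_by_regular_aut tau -> induced_by_regular_aut tau' ->
       coord_transitive (S tau) -> coord_transitive (S tau') ->
       neighbor_transitive (S (catperm tau tau')))].
Proof.
have rho0 := catperm0 htau htau'.
have rho_inj := catperm_inj (@perm_inj _ tau) (@perm_inj _ tau').
have CT_cat : coord_transitive (S tau) -> coord_transitive (S tau') ->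
    coord_transitive (S (catperm tau tau')).
  move=> /(coord_transitive_swappable htau) sw /(coord_transitive_swappable htau') sw'.
  exact: swappable_coord_transitive rho0 (swappable_catperm sw sw').
split => //.
  move=> /(point_transitive_swappable htau) sw /(point_transitive_swappable htau') sw'.
  apply: (coord_transitive_point_transitive rho0 rho_inj).
  exact: swappable_coord_transitive rho0 (swappable_catperm sw sw').
move=> /regular_aut_homogeneous hom /regular_aut_homogeneous hom' CT CT'.
have autS := homogeneous_code_aut rho0 (homogeneous_catperm hom hom').
by split; [apply: Aut_transitive_code | apply: Aut_transitive_neighbors (CT_cat CT CT') autS].
Qed.
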